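(* Let $H=\left(\frac{3,-1}{\mathbb{Q}}\right)$, and let $d_1\neq d_2$ be square-free positive integers such that for $i=1,2$ the set $S_{d_i}$ is infinite. For $i=1,2$ let $\varphi_{d_i}:\mathbb{N}\to S_{d_i}$ be a bijection, let $a_i,b_i>0$ be rationals such that $a_i+b_i\sqrt{d_i}$ is a unit of infinite order in $\mathbb{Q}(\sqrt{d_i})$, and put $\psi_{d_i}(t,m)=(a_i+b_i\varphi_{d_i}(t))^m\in H$. Then for $t_1,t_2,m_1,m_2\in\mathbb{N}$ one has $\psi_{d_1}(t_1,m_1)=\psi_{d_2}(t_2,m_2)$ if and only if $m_1=m_2=0$.
   Context: $\mathbb{N}=\{0,1,2,\dots\}$. $H=\left(\frac{3,-1}{\mathbb{Q}}\right)$ is the quaternion $\mathbb{Q}$-algebra with basis $1,I,J,K=IJ$ and relations $I^2=3$, $J^2=-1$, $IJ=-JI$. For a square-free $d>0$, $S_d=\{xI+yJ+zK:(x,y,z)\in\mathbb{Z}^3,\ 3x^2-y^2+3z^2=d\}$; each $\omega\in S_d$ satisfies $\omega^2=d$. *)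

From Stdlib Require List.
From HB Require Import structures.
From mathcomp Require Import all_boot all_order all_algebra.
Set Implicit Arguments. Unset Strict Implicit. Unset Printing Implicit Defensive.
Import Order.TTheory GRing.Theory Num.Theory.
Local Open Scope ring_scope.

(* The quaternion algebra H = (3,-1 / Q): q0 + q1 I + q2 J + q3 K,
   I^2 = 3, J^2 = -1, IJ = -JI = K. *)
Record quat := Quat { q0 : rat; q1 : rat; q2 : rat; q3 : rat }.

Definition qone : quat := Quat 1 0 0 0.

(* Multiplication derived from I^2=3, J^2=-1, K^2=3, IJ=K, JI=-K,
   IK=3J, KI=-3J, JK=I, KJ=-I. *)
Definition qmul (a b : quat) : quat :=
  Quat (q0 a * q0 b + 3 * (q1 a * q1 b) - q2 a * q2 b + 3 * (q3 a * q3 b))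
       (q0 a * q1 b + q1 a * q0 b + q2 a * q3 b - q3 a * q2 b)
       (q0 a * q2 b + q2 a * q0 b + 3 * (q1 a * q3 b) - 3 * (q3 a * q1 b))
       (q0 a * q3 b + q3 a * q0 b + q1 a * q2 b - q2 a * q1 b).

Fixpoint qpow (a : quat) (m : nat) : quat :=
  match m with O => qone | S k => qmul (qpow a k) a end.

Definition qaffine (a b : rat) (w : quat) : quat :=
  Quat (a + b * q0 w) (b * q1 w) (b * q2 w) (b * q3 w).

Definition in_S (d : nat) (w : quat) : Prop :=
  exists x y z : int,
    w = Quat 0 x%:~R y%:~R z%:~R /\ 3 * x ^+ 2 - y ^+ 2 + 3 * z ^+ 2 = (d%:Z).

Definition S_infinite (d : nat) : Prop :=
  ~ exists l : seq quat, forall w, in_S d w -> List.In w l.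

Definition bij_onto_S (d : nat) (phi : nat -> quat) : Prop :=
  (forall t, in_S d (phi t)) /\ injective phi /\
  (forall w, in_S d w -> exists t, phi t = w).

Definition squarefree (d : nat) : Prop :=
  forall p : nat, prime p -> ~~ (p * p %| d)%N.

(* The quadratic field Q(sqrt d), elements x + y sqrt d as pairs. *)
Definition qd_mul (d : nat) (u v : rat * rat) : rat * rat :=
  (u.1 * v.1 + d%:R * (u.2 * v.2), u.1 * v.2 + u.2 * v.1).

Fixpoint qd_pow (d : nat) (u : rat * rat) (m : nat) : rat * rat :=
  match m with O => (1, 0) | S k => qd_mul d (qd_pow d u k) u end.

(* a + b sqrt d is a unit of the ring of integers of Q(sqrt d):
   it is an algebraic integer (trace 2a and norm a^2 - d b^2 in Z)
   with norm +-1. *)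
Definition is_int_unit (d : nat) (a b : rat) : Prop :=
  (exists k : int, 2 * a = k%:~R) /\
  (a ^+ 2 - d%:R * b ^+ 2 = 1 \/ a ^+ 2 - d%:R * b ^+ 2 = -1).

Definition infinite_order (d : nat) (a b : rat) : Prop :=
  forall m : nat, (0 < m)%N -> qd_pow d (a, b) m <> (1, 0).

From HB Require Import structures.
From mathcomp Require Import all_boot all_order all_algebra.
From mathcomp Require Import ring lra zify.
Import Order.TTheory GRing.Theory Num.Theory.
Local Open Scope ring_scope.

(* For w in S_d the algebra Q[w] is a copy of Q(sqrt d), so
   (a + b w)^m = X_m + Y_m w with X_m + Y_m sqrt d = (a + b sqrt d)^m.
   Squaring the pure parts of an equality psi_d1(t1,m1) = psi_d2(t2,m2)
   gives d1 Y_1^2 = d2 Y_2^2.  As a, b > 0, Y_m vanishes only for m = 0,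
   and d1/d2 is not the square of a positive rational when d1 <> d2 are
   squarefree. *)

(* [w * w = pure_sq w] whenever [q0 w = 0]. *)
Definition pure_sq (w : quat) : rat := 3 * q1 w ^+ 2 - q2 w ^+ 2 + 3 * q3 w ^+ 2.

Lemma in_S_pure {d w} : in_S d w -> q0 w = 0 /\ pure_sq w = d%:R.
Proof.
move=> [x [y [z [-> e]]]]; split => //.
have := congr1 (fun k : int => (k%:~R : rat)) e.
by rewrite /pure_sq /= rmorphD rmorphB /= !rmorphM /= !expr2.
Qed.

Lemma pure_sq_qaffine a b w : pure_sq (qaffine a b w) = b ^+ 2 * pure_sq w.
Proof. rewrite /pure_sq /=; ring. Qed.

Lemma qpow_qaffine {d a b w} : q0 w = 0 -> pure_sq w = d%:R -> forall m,
  qpow (qaffine a b w) m = qaffine (qd_pow d (a, b) m).1 (qd_pow d (a, b) m).2 w.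
Proof.
move=> w0 wd; elim=> [|m IH] /=; first by rewrite /qaffine w0 !mul0r addr0.
rewrite IH /qmul /qaffine /= w0 -wd /pure_sq; congr Quat; ring.
Qed.

Lemma qd_pow_ge0 d {a b} : 0 < a -> 0 < b -> forall m,
  0 < (qd_pow d (a, b) m).1 /\ 0 <= (qd_pow d (a, b) m).2.
Proof.
move=> a0 b0; elim=> [|m [x0 y0]] /=; first by rewrite ltr01 lexx.
have := mulr_gt0 x0 a0; have := mulr_gt0 x0 b0; have := mulr_ge0 y0 (ltW a0).
have := mulr_ge0 (ler0n rat d) (mulr_ge0 y0 (ltW b0)).
by split; lra.
Qed.

Lemma qd_pow_snd_eq0 d a b m : 0 < a -> 0 < b ->
  ((qd_pow d (a, b) m).2 == 0) = (m == 0)%N.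
Proof.
move=> a0 b0; case: m => [|m] /=; first by rewrite eqxx.
have [x0 y0] := qd_pow_ge0 d a0 b0 m.
by rewrite gt_eqF // ltr_pwDl ?mulr_gt0 ?mulr_ge0 // ltW.
Qed.

Lemma logn_squarefree_le1 d p : (0 < d)%N -> squarefree d -> (logn p d <= 1)%N.
Proof.
move=> d0 sq; case pp: (prime p); last by rewrite lognE pp.
have := sq p pp; rewrite -[(p * p)%N]/(p ^ 2)%N.
by rewrite pfactor_dvdn // -ltnNge ltnS.
Qed.

Lemma squarefree_eq_of_sq_mul d1 d2 A B : (0 < d1)%N -> (0 < d2)%N ->
  (0 < A)%N -> (0 < B)%N -> squarefree d1 -> squarefree d2 ->
  (d1 * A ^ 2 = d2 * B ^ 2)%N -> d1 = d2.
Proof.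
move=> d10 d20 A0 B0 s1 s2 e; apply: eqn_from_log => // p.
have := congr1 (logn p) e; rewrite !lognM ?expn_gt0 ?A0 ?B0 //.
have := @logn_squarefree_le1 d1 p d10 s1; have := @logn_squarefree_le1 d2 p d20 s2; lia.
Qed.

Lemma pos_rat_frac {y : rat} : 0 < y ->
  exists A B : nat, [/\ (0 < A)%N, (0 < B)%N & y = A%:R / B%:R].
Proof.
move=> y0; have := numq_gt0 y; rewrite y0; have := denq_gt0 y.
case En: (numq y) => [n|] //; case Ed: (denq y) => [e|] // e0 n0.
by exists n, e; split => //; rewrite -[y]divq_num_den En Ed.
Qed.

Lemma squarefree_eq_of_rat_sq d1 d2 (y1 y2 : rat) : (0 < d1)%N -> (0 < d2)%N ->
  squarefree d1 -> squarefree d2 -> 0 < y1 -> 0 < y2 ->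
  d1%:R * y1 ^+ 2 = d2%:R * y2 ^+ 2 -> d1 = d2.
Proof.
move=> d10 d20 s1 s2 y10 y20.
have [A [B [A0 B0 ->]]] := pos_rat_frac y10.
have [C [D [C0 D0 ->]]] := pos_rat_frac y20 => e.
apply: (@squarefree_eq_of_sq_mul d1 d2 (A * D) (C * B)); rewrite ?muln_gt0 ?A0 ?B0 ?C0 ?D0 //.
apply/eqP; rewrite -(eqr_nat rat) !natrM; apply/eqP.
have Bn : (B%:R : rat) != 0 by rewrite pnatr_eq0 -lt0n.
have Dn : (D%:R : rat) != 0 by rewrite pnatr_eq0 -lt0n.
transitivity (d1%:R * (A%:R / B%:R) ^+ 2 * (B%:R * D%:R) ^+ 2 : rat); first by field.
by rewrite e; field.
Qed.

Lemma squarefree_sq_ratio_eq0 {d1 d2} {y1 y2 : rat} : (0 < d1)%N -> (0 < d2)%N ->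
  squarefree d1 -> squarefree d2 -> d1 <> d2 -> 0 <= y1 -> 0 <= y2 ->
  d1%:R * y1 ^+ 2 = d2%:R * y2 ^+ 2 -> y1 = 0 /\ y2 = 0.
Proof.
move=> d10 d20 s1 s2 dne; rewrite !le_eqVlt.
have sq_gt0 d (y : rat) : (0 < d)%N -> 0 < y -> 0 < d%:R * y ^+ 2.
  by move=> d0 y0; rewrite mulr_gt0 ?ltr0n ?exprn_gt0.
case/predU1P=> [<-|y10]; case/predU1P=> [<-|y20] //; rewrite ?expr0n ?mulr0.
- by move=> /esym/eqP; rewrite gt_eqF ?sq_gt0.
- by move=> /eqP; rewrite gt_eqF ?sq_gt0.
- by move=> e; case: dne; exact: squarefree_eq_of_rat_sq e.
Qed.

Theorem mainTheorem5 (d1 d2 : nat) (phi1 phi2 : nat -> quat)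
    (a1 b1 a2 b2 : rat) :
  (0 < d1)%N -> squarefree d1 -> (0 < d2)%N -> squarefree d2 -> d1 <> d2 ->
  S_infinite d1 -> S_infinite d2 ->
  bij_onto_S d1 phi1 -> bij_onto_S d2 phi2 ->
  0 < a1 -> 0 < b1 -> 0 < a2 -> 0 < b2 ->
  is_int_unit d1 a1 b1 -> infinite_order d1 a1 b1 ->
  is_int_unit d2 a2 b2 -> infinite_order d2 a2 b2 ->
  forall t1 t2 m1 m2 : nat,
    qpow (qaffine a1 b1 (phi1 t1)) m1 = qpow (qaffine a2 b2 (phi2 t2)) m2
    <-> (m1 = 0%N /\ m2 = 0%N).
Proof.
move=> d10 s1 d20 s2 dne _ _ [S1 _] [S2 _] a10 b10 a20 b20 _ _ _ _ t1 t2 m1 m2.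
split; last by case=> -> ->.
have [w10 w1d] := in_S_pure (S1 t1); have [w20 w2d] := in_S_pure (S2 t2).
rewrite (qpow_qaffine w10 w1d) (qpow_qaffine w20 w2d).
move/(congr1 pure_sq); rewrite !pure_sq_qaffine w1d w2d ![_ ^+ 2 * _]mulrC => e.
have [[_ y10] [_ y20]] := (qd_pow_ge0 d1 a10 b10 m1, qd_pow_ge0 d2 a20 b20 m2).
have [/eqP Y1 /eqP Y2] := squarefree_sq_ratio_eq0 d10 d20 s1 s2 dne y10 y20 e.
by move: Y1 Y2; rewrite !qd_pow_snd_eq0 // => /eqP -> /eqP ->.
Qed.
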